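(* Let $B,U\ge 1$, $\mathbf{H}\in\mathbb{C}^{B\times U}$, $\mathbf{j}\in\mathbb{C}^B$, and let $\mathbf{y}=\mathbf{H}\mathbf{s}+\mathbf{j}w+\mathbf{n}\in\mathbb{C}^B$, where $\mathbf{s}\in\mathbb{C}^U$ has independent zero-mean entries with $\mathbb{E}[\mathbf{s}\mathbf{s}^H]=E_s\mathbf{I}_U$, $w$ is circularly-symmetric complex Gaussian with variance $E_J$, $\mathbf{n}$ is i.i.d. circularly-symmetric complex Gaussian with per-entry variance $N_0$, and $\mathbf{s},w,\mathbf{n}$ are mutually independent. Let $\mathcal{A},\mathcal{B}\subset\mathbb{C}$ and set $$\mathbf{C}_{\mathbf{y}}=E_s\mathbf{H}\mathbf{H}^H+E_J\mathbf{j}\mathbf{j}^H+N_0\mathbf{I}_B,$$ the covariance matrix of $\mathbf{y}$. Consider the optimization problem $$\{\hat\beta,\hat{\mathbf{b}},\hat{\mathbf{a}}\}=\arg\min_{\beta\in\mathbb{C},\,\mathbf{b}\in\mathcal{B}^B,\,\mathbf{a}\in\mathcal{A}^B}\ \mathbb{E}_{\mathbf{s},w,\mathbf{n}}\big[\|\beta\mathbf{b}\mathbf{a}^H\mathbf{y}-\mathbf{j}w\|^2\big].$$ Then this problem is separable in $\mathbf{b}$ and $\mathbf{a}$, and its solution is given by $$\hat{\mathbf{b}}=\arg\max_{\mathbf{b}\in\mathcal{B}^B}\frac{|\mathbf{j}^H\mathbf{b}|^2}{\|\mathbf{b}\|^2},\qquad \hat{\mathbf{a}}=\arg\max_{\mathbf{a}\in\mathcal{A}^B}\frac{|\mathbf{j}^H\mathbf{a}|^2}{\mathbf{a}^H\mathbf{C}_{\mathbf{y}}\mathbf{a}},\qquad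 \hat\beta=\frac{E_J\,\mathbf{j}^H\hat{\mathbf{a}}\,\hat{\mathbf{b}}^H\mathbf{j}}{\|\hat{\mathbf{b}}\|^2\,\hat{\mathbf{a}}^H\mathbf{C}_{\mathbf{y}}\hat{\mathbf{a}}}.$$
   Context: This arises in choosing an analog transform of the form $\mathbf{P}=\mathbf{I}_B-\beta\mathbf{b}\mathbf{a}^H$ applied to the received vector $\mathbf{y}$ of a multi-antenna receiver with $B$ antennas, $U$ users with channel matrix $\mathbf{H}$, and a jammer with channel $\mathbf{j}$ and transmit signal $w$; minimizing the objective above is equivalent to minimizing $\mathbb{E}\|\mathbf{P}\mathbf{y}-(\mathbf{H}\mathbf{s}+\mathbf{n})\|^2$. $\|\cdot\|$ is the Euclidean norm and $(\cdot)^H$ the conjugate transpose. *)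

(* Complex scalars: an arbitrary numClosedFieldType C
   (e.g. algC, or R[i] for R : rcfType); this includes the complex numbers. *)
From HB Require Import structures.
From mathcomp Require Import all_boot all_order all_algebra.
Set Implicit Arguments. Unset Strict Implicit. Unset Printing Implicit Defensive.
Import Order.TTheory GRing.Theory Num.Theory.
Local Open Scope ring_scope.

Section Defs.
Variable C : numClosedFieldType.

Definition adjmx (m n : nat) (A : 'M[C]_(m, n)) : 'M[C]_(n, m) :=
  map_mx (fun x => x^*) A^T.

Definition frob2 (m n : nat) (A : 'M[C]_(m, n)) : C :=
  \sum_(i < m) \sum_(k < n) `|A i k| ^+ 2.

Definition sc (M : 'M[C]_1) : C := M 0 0.

Definition vec_in (n : nat) (S : C -> Prop) (v : 'cV[C]_n) : Prop :=
  forall i, S (v i 0).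

Definition covy (B U : nat) (H : 'M[C]_(B, U)) (j : 'cV[C]_B) (Es EJ N0 : C)
  : 'M[C]_B :=
  Es *: (H *m adjmx H) + EJ *: (j *m adjmx j) + N0%:M.

(* E_{s,w,n} || Ls s + Lw w + Ln n ||^2  for mutually independent, zero-mean
   s (E[s s^H] = Es I), w (variance EJ), n (E[n n^H] = N0 I):
   = Es ||Ls||_F^2 + EJ ||Lw||^2 + N0 ||Ln||_F^2. *)
Definition exp_sqerr (B U : nat) (Ls : 'M[C]_(B, U)) (Lw : 'cV[C]_B)
  (Ln : 'M[C]_B) (Es EJ N0 : C) : C :=
  Es * frob2 Ls + EJ * frob2 Lw + N0 * frob2 Ln.

(* Objective  E || beta b a^H y - j w ||^2  with y = H s + j w + n:
   beta b a^H y - j w = (P H) s + (P j - j) w + P n,  P = beta b a^H. *)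
Definition mse (B U : nat) (H : 'M[C]_(B, U)) (j : 'cV[C]_B) (Es EJ N0 : C)
  (beta : C) (b a : 'cV[C]_B) : C :=
  let P := beta *: (b *m adjmx a) in
  exp_sqerr (P *m H) (P *m j - j) P Es EJ N0.

End Defs.

(* With x = (a^H j)(j^H b) and K = ||b||^2 a^H C_y a, the objective is the
   real quadratic |beta|^2 K - 2 E_J Re(beta x) + E_J ||j||^2 in beta.
   Completing the square, its minimum over beta is
   E_J ||j||^2 - E_J^2 |x|^2 / K, attained at beta = E_J x^* / K, and
   |x|^2 / K factors as (|j^H a|^2 / a^H C_y a) (|j^H b|^2 / ||b||^2).
   Minimizing the objective thus amounts to maximizing each factor
   separately. *)
From HB Require Import structures.
From mathcomp Require Import all_boot all_order all_algebra.
From mathcomp Require Import ring.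
Import Order.TTheory GRing.Theory Num.Theory.
Local Open Scope ring_scope.
Set Implicit Arguments. Unset Strict Implicit.

Section AdjointAndNorm.
Variable C : numClosedFieldType.

Definition cdot n (u v : 'cV[C]_n) : C := sc (adjmx u *m v).

Definition qform n (M : 'M[C]_n) (v : 'cV[C]_n) : C := sc (adjmx v *m M *m v).

Lemma cdotE n (u v : 'cV[C]_n) : cdot u v = \sum_i (u i 0)^* * v i 0.
Proof. by rewrite /cdot /sc mxE; apply: eq_bigr => i _; rewrite !mxE. Qed.

Lemma conj_cdot n (u v : 'cV[C]_n) : (cdot u v)^* = cdot v u.
Proof.
rewrite !cdotE rmorph_sum; apply: eq_bigr => i _.
by rewrite rmorphM /= conjCK mulrC.
Qed.

Lemma cdot0r n (u : 'cV[C]_n) : cdot u 0 = 0.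
Proof. by rewrite /cdot mulmx0 /sc mxE. Qed.

Lemma cdot0l n (u : 'cV[C]_n) : cdot 0 u = 0.
Proof. by rewrite -conj_cdot cdot0r rmorph0. Qed.

Lemma cdotBr n (u v w : 'cV[C]_n) : cdot u (v - w) = cdot u v - cdot u w.
Proof. by rewrite !cdotE -sumrB; apply: eq_bigr => i _; rewrite !mxE mulrBr. Qed.

Lemma cdotBl n (u v w : 'cV[C]_n) : cdot (v - w) u = cdot v u - cdot w u.
Proof. by rewrite -conj_cdot cdotBr rmorphB /= !conj_cdot. Qed.

Lemma cdotZr n c (u v : 'cV[C]_n) : cdot u (c *: v) = c * cdot u v.
Proof. by rewrite !cdotE mulr_sumr; apply: eq_bigr => i _; rewrite !mxE mulrCA. Qed.

Lemma cdotZl n c (u v : 'cV[C]_n) : cdot (c *: u) v = c^* * cdot u v.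
Proof. by rewrite -conj_cdot cdotZr rmorphM /= conj_cdot. Qed.

Lemma frob2_col n (v : 'cV[C]_n) : frob2 v = cdot v v.
Proof.
rewrite cdotE; apply: eq_bigr => i _.
by rewrite big_ord1 normCK mulrC.
Qed.

Lemma frob2_row n (r : 'rV[C]_n) : frob2 r = sc (r *m adjmx r).
Proof.
by rewrite /frob2 /sc big_ord1 mxE; apply: eq_bigr => k _; rewrite !mxE normCK.
Qed.

Lemma frob2_adjmx m n (A : 'M[C]_(m, n)) : frob2 (adjmx A) = frob2 A.
Proof.
rewrite /frob2 exchange_big; apply: eq_bigr => k _; apply: eq_bigr => i _.
by rewrite !mxE norm_conjC.
Qed.

Lemma frob2Z m n c (A : 'M[C]_(m, n)) : frob2 (c *: A) = `|c| ^+ 2 * frob2 A.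
Proof.
rewrite /frob2 mulr_sumr; apply: eq_bigr => i _; rewrite mulr_sumr.
by apply: eq_bigr => k _; rewrite mxE normrM exprMn.
Qed.

Lemma frob2_mul_col_row m n (u : 'cV[C]_m) (r : 'rV[C]_n) :
  frob2 (u *m r) = frob2 u * frob2 r.
Proof.
rewrite /frob2 big_ord1 mulr_suml; apply: eq_bigr => i _.
rewrite big_ord1 mulr_sumr; apply: eq_bigr => k _.
by rewrite mxE big_ord1 normrM exprMn.
Qed.

Lemma frob2_row_ge0 m n (A : 'M[C]_(m, n)) i : 0 <= \sum_k `|A i k| ^+ 2.
Proof. by apply: sumr_ge0 => k _; apply: exprn_ge0. Qed.

Lemma frob2_ge0 m n (A : 'M[C]_(m, n)) : 0 <= frob2 A.
Proof. by apply: sumr_ge0 => i _; apply: frob2_row_ge0. Qed.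

Lemma frob2_eq0 m n (A : 'M[C]_(m, n)) : (frob2 A == 0) = (A == 0).
Proof.
apply/idP/eqP => [/eqP /psumr_eq0P A0 | ->]; last first.
  by rewrite /frob2 big1 // => i _; rewrite big1 // => k _; rewrite mxE normr0 expr0n.
apply/matrixP => i k; apply/eqP; rewrite mxE -normr_eq0 -sqrf_eq0.
have /psumr_eq0P -> // := A0 (fun i _ => frob2_row_ge0 A i) i isT.
by move=> l _; apply: exprn_ge0.
Qed.

Lemma adjmx_mul m n p (A : 'M[C]_(m, n)) (B : 'M[C]_(n, p)) :
  adjmx (A *m B) = adjmx B *m adjmx A.
Proof.
apply/matrixP => i k; rewrite !mxE rmorph_sum; apply: eq_bigr => l _.
by rewrite !mxE rmorphM mulrC.
Qed.

Lemma adjmxK m n (A : 'M[C]_(m, n)) : adjmx (adjmx A) = A.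
Proof. by apply/matrixP => i k; rewrite !mxE conjCK. Qed.

Lemma scD (A B : 'M[C]_1) : sc (A + B) = sc A + sc B.
Proof. by rewrite /sc mxE. Qed.

Lemma scZ c (A : 'M[C]_1) : sc (c *: A) = c * sc A.
Proof. by rewrite /sc mxE. Qed.

Lemma scM (A B : 'M[C]_1) : sc (A *m B) = sc A * sc B.
Proof. by rewrite /sc mxE big_ord1. Qed.

Lemma mul_col_sc n (u : 'cV[C]_n) (M : 'M[C]_1) : u *m M = sc M *: u.
Proof. by apply/matrixP => i k; rewrite !mxE big_ord1 mulrC (ord1 k). Qed.

End AdjointAndNorm.

Section ComplexQuadratic.
Variable C : numClosedFieldType.
Variables (c K x d : C).
Hypothesis c_ge0 : 0 <= c.

Definition cquad (beta : C) : C :=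
  beta * beta^* * K - c * (beta * x + (beta * x)^*) + c * d.

Lemma cquad_square beta : 0 < K ->
  cquad beta = c * d - c ^+ 2 * `|x| ^+ 2 / K + `|K * beta - c * x^*| ^+ 2 / K.
Proof.
move=> K_gt0; rewrite /cquad !normCK rmorphB !rmorphM /= conjCK.
rewrite (geC0_conj c_ge0) (geC0_conj (ltW K_gt0)).
by field; apply: lt0r_neq0.
Qed.

Lemma cquad_ge beta : 0 <= K -> (K = 0 -> x = 0) ->
  c * d - c ^+ 2 * `|x| ^+ 2 / K <= cquad beta.
Proof.
rewrite le0r => /orP [/eqP K0 /(_ K0) x0 | K_gt0 _].
  rewrite /cquad K0 x0.
  by rewrite !(normr0, expr0n, mulr0, mul0r, rmorph0, addr0, subr0, oppr0, add0r).
by rewrite cquad_square // lerDl divr_ge0 ?exprn_ge0 ?normr_ge0 ?ltW.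
Qed.

Lemma cquad_min : 0 < K -> cquad (c * x^* / K) = c * d - c ^+ 2 * `|x| ^+ 2 / K.
Proof.
move=> K_gt0; rewrite cquad_square // [K * _]mulrC divfK ?lt0r_neq0 //.
by rewrite subrr normr0 expr0n mul0r addr0.
Qed.

End ComplexQuadratic.

Section Objective.
Variable C : numClosedFieldType.
Variables (B U : nat) (H : 'M[C]_(B, U)) (j : 'cV[C]_B) (Es EJ N0 : C).
Hypotheses (Es_ge0 : 0 <= Es) (EJ_ge0 : 0 <= EJ) (N0_gt0 : 0 < N0).

Local Notation Cy := (covy H j Es EJ N0).

Definition jammer_alignment (b : 'cV[C]_B) : C := `|cdot j b| ^+ 2 / frob2 b.

Definition jammer_sinr (a : 'cV[C]_B) : C := `|cdot j a| ^+ 2 / qform Cy a.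

Lemma qform_covy a :
  qform Cy a = Es * frob2 (adjmx a *m H) + EJ * `|cdot j a| ^+ 2 + N0 * frob2 a.
Proof.
rewrite /qform /covy !mulmxDr !mulmxDl !scD -!scalemxAr -!scalemxAl !scZ.
rewrite mul_mx_scalar -scalemxAl scZ frob2_row adjmx_mul adjmxK !mulmxA.
rewrite -[adjmx a *m j *m adjmx j *m a]mulmxA scM normCK frob2_col.
by rewrite -/(cdot a j) -/(cdot j a) -/(cdot a a) -conj_cdot [_^* * _]mulrC.
Qed.

Lemma qform_covy_ge0 a : 0 <= qform Cy a.
Proof.
by rewrite qform_covy !addr_ge0 ?mulr_ge0 ?frob2_ge0 ?exprn_ge0 ?normr_ge0 // ltW.
Qed.

Lemma qform_covy_gt0 a : a != 0 -> 0 < qform Cy a.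
Proof.
rewrite -frob2_eq0 => a_neq0; rewrite qform_covy ltr_wpDl //.
  by rewrite addr_ge0 ?mulr_ge0 ?frob2_ge0 ?exprn_ge0 ?normr_ge0.
by rewrite mulr_gt0 // lt0r a_neq0 frob2_ge0.
Qed.

Lemma jammer_alignment0 : jammer_alignment 0 = 0.
Proof. by rewrite /jammer_alignment cdot0r normr0 expr0n mul0r. Qed.

Lemma jammer_sinr0 : jammer_sinr 0 = 0.
Proof. by rewrite /jammer_sinr cdot0r normr0 expr0n mul0r. Qed.

Lemma jammer_alignment_ge0 b : 0 <= jammer_alignment b.
Proof. by rewrite divr_ge0 ?exprn_ge0 ?normr_ge0 ?frob2_ge0. Qed.

Lemma jammer_sinr_ge0 a : 0 <= jammer_sinr a.
Proof. by rewrite divr_ge0 ?exprn_ge0 ?normr_ge0 ?qform_covy_ge0. Qed.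

Lemma mse_cquad beta b a :
  mse H j Es EJ N0 beta b a =
  cquad EJ (frob2 b * qform Cy a) (cdot a j * cdot j b) (frob2 j) beta.
Proof.
rewrite qform_covy /mse /exp_sqerr /cquad -!scalemxAl -!mulmxA.
rewrite !frob2Z !frob2_mul_col_row frob2_adjmx mul_col_sc scalerA.
rewrite -[sc (adjmx a *m j)]/(cdot a j) !frob2_col !cdotBl !cdotBr !cdotZl !cdotZr.
rewrite -(conj_cdot b j) -(conj_cdot a j) !normCK !rmorphM /= !conjCK.
ring.
Qed.

Lemma cquad_ratio_mul b a :
  `|cdot a j * cdot j b| ^+ 2 / (frob2 b * qform Cy a) =
  jammer_sinr a * jammer_alignment b.
Proof.
rewrite /jammer_sinr /jammer_alignment -conj_cdot normrM norm_conjC exprMn.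
by rewrite invfM; ring.
Qed.

(* Also valid for a = 0 or b = 0, where the junk value x / 0 = 0 makes the
   corresponding ratio vanish. *)
Lemma mse_ge beta b a :
  EJ * frob2 j - EJ ^+ 2 * (jammer_sinr a * jammer_alignment b)
    <= mse H j Es EJ N0 beta b a.
Proof.
rewrite mse_cquad -cquad_ratio_mul mulrA.
apply: cquad_ge => //; first by rewrite mulr_ge0 ?frob2_ge0 ?qform_covy_ge0.
move/eqP; rewrite mulf_eq0 => /orP [|/eqP qa0].
  by rewrite frob2_eq0 => /eqP ->; rewrite cdot0r mulr0.
have [-> | /qform_covy_gt0] := eqVneq a 0; first by rewrite cdot0l mul0r.
by rewrite qa0 ltxx.
Qed.

Lemma mse_min b a : b != 0 -> a != 0 ->
  let K := frob2 b * qform Cy a in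
  let x := cdot a j * cdot j b in
  mse H j Es EJ N0 (EJ * x^* / K) b a =
  EJ * frob2 j - EJ ^+ 2 * (jammer_sinr a * jammer_alignment b).
Proof.
rewrite -frob2_eq0 => b_neq0 a_neq0 K x.
rewrite mse_cquad cquad_min //; first by rewrite -cquad_ratio_mul -mulrA.
by rewrite mulr_gt0 ?qform_covy_gt0 // lt0r b_neq0 frob2_ge0.
Qed.

End Objective.

Theorem proposition1 (C : numClosedFieldType) (B U : nat)
  (HB : (0 < B)%N) (HU : (0 < U)%N)
  (H : 'M[C]_(B, U)) (j : 'cV[C]_B) (Es EJ N0 : C)
  (hEs : 0 <= Es) (hEJ : 0 <= EJ) (hN0 : 0 < N0)
  (SA SB : C -> Prop) (bh ah : 'cV[C]_B) :
  (* bh is an argmax of |j^H b|^2 / ||b||^2 over (nonzero) b in SB^B *)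
  vec_in SB bh -> bh != 0 ->
  (forall b : 'cV[C]_B, vec_in SB b -> b != 0 ->
     `|sc (adjmx j *m b)| ^+ 2 / frob2 b
       <= `|sc (adjmx j *m bh)| ^+ 2 / frob2 bh) ->
  (* ah is an argmax of |j^H a|^2 / (a^H C_y a) over (nonzero) a in SA^B *)
  vec_in SA ah -> ah != 0 ->
  (forall a : 'cV[C]_B, vec_in SA a -> a != 0 ->
     `|sc (adjmx j *m a)| ^+ 2 / sc (adjmx a *m covy H j Es EJ N0 *m a)
       <= `|sc (adjmx j *m ah)| ^+ 2
            / sc (adjmx ah *m covy H j Es EJ N0 *m ah)) ->
  (* then (betah, bh, ah) minimizes the MSE over C x SB^B x SA^B *)
  let betah := EJ * sc (adjmx j *m ah) * sc (adjmx bh *m j)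
               / (frob2 bh * sc (adjmx ah *m covy H j Es EJ N0 *m ah)) in
  forall (beta : C) (b a : 'cV[C]_B), vec_in SB b -> vec_in SA a ->
    mse H j Es EJ N0 betah bh ah <= mse H j Es EJ N0 beta b a.
Proof.
move=> _ bh_neq0 bh_max _ ah_neq0 ah_max betah beta b a b_in a_in.
have b_le : jammer_alignment j b <= jammer_alignment j bh.
  have [-> | b_neq0] := eqVneq b 0; last exact: bh_max.
  by rewrite jammer_alignment0 jammer_alignment_ge0.
have a_le : jammer_sinr H j Es EJ N0 a <= jammer_sinr H j Es EJ N0 ah.
  have [-> | a_neq0] := eqVneq a 0; last exact: ah_max.
  by rewrite jammer_sinr0 (jammer_sinr_ge0 _ _ hEs hEJ hN0).
have -> : betah = EJ * (cdot ah j * cdot j bh)^*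
                   / (frob2 bh * qform (covy H j Es EJ N0) ah).
  by rewrite /betah rmorphM /= !conj_cdot mulrA.
rewrite (mse_min _ _ hEs hEJ hN0) //.
apply: le_trans (mse_ge _ _ hEs hEJ hN0 beta b a); rewrite lerD2l lerN2.
rewrite ler_wpM2l ?exprn_ge0 // ler_pM ?jammer_alignment_ge0 //.
exact: (jammer_sinr_ge0 _ _ hEs hEJ hN0).
Qed.
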